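(* Let $I$ be a finite tree. An expression $\Sigma_{i_1}\Sigma_{i_2}\cdots\Sigma_{i_r}$ for a morphism of $R_0(I)$ is reduced if and only if between any two occurrences of the same letter $i$ in the word $i_1i_2\cdots i_r$ there is an occurrence of some $j$ adjacent to $i$ in $I$.
   Context: Let $I$ be a finite tree. $\mathrm{Quiv}(I)$ is the set of orientations of $I$. For $\Gamma\in\mathrm{Quiv}(I)$ and a source or sink $i$ of $\Gamma$, $s_i\Gamma$ is the orientation obtained by reversing all arrows at $i$. The groupoid $R_0(I)$ has object set $\mathrm{Quiv}(I)$ and is generated by elementary isomorphisms $\Sigma_i:\Gamma\to s_i\Gamma$ (for each $\Gamma$ and each source or sink $i$ of $\Gamma$) subject to the relations, whenever both sides are defined: (R1) $\Sigma_i^2=1$; (R2) $\Sigma_i\Sigma_j=\Sigma_j\Sigma_i$ when $i,j$ are not adjacent. Composition is right-to-left. An expression for a morphism $\Sigma:\Gamma\to\Gamma'$ is a composable word $\Sigma_{i_1}\cdots\Sigma_{i_r}$ equal to $\Sigma$ (so $i_r$ is a source or sink of $\Gamma$, $i_{r-1}$ a source or sink of $s_{i_r}\Gamma$, etc.). The length $\ell(\Sigma)$ is the minimal length of an expression for $\Sigma$, and an expression of length $\ell(\Sigma)$ is called reduced. *)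

From mathcomp Require Import all_boot.
From Stdlib Require Import Relations.
Set Implicit Arguments. Unset Strict Implicit. Unset Printing Implicit Defensive.

Definition is_tree (T : finType) (e : rel T) : Prop :=
  [/\ 0 < #|T|,
      (forall x y, e x y = e y x),
      (forall x, ~~ e x x),
      (forall x y, connect e x y) &
      (forall p : seq T, uniq p -> 3 <= size p -> ~~ cycle e p)].

(* An orientation Gam of the tree: Gam x y means there is an arrow x -> y. *)
Definition is_orientation (T : finType) (e : rel T) (Gam : rel T) : Prop :=
  forall x y, Gam x y = e x y && ~~ Gam y x.

Definition is_source (T : finType) (Gam : rel T) (i : T) : bool :=
  [forall j, ~~ Gam j i].
Definition is_sink (T : finType) (Gam : rel T) (i : T) : bool :=
  [forall j, ~~ Gam i j].

Definition flip (T : finType) (Gam : rel T) (i : T) : rel T :=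
  fun x y => if (x == i) || (y == i) then Gam y x else Gam x y.

Fixpoint apply_ok (T : finType) (Gam : rel T) (s : seq T) : Prop :=
  match s with
  | [::] => True
  | i :: s' => (is_source Gam i || is_sink Gam i) /\ apply_ok (flip Gam i) s'
  end.

(* The word [:: i1; ...; ir] stands for Sigma_{i1} ... Sigma_{ir}
   (composition right-to-left), so Sigma_{ir} is applied first to Gam. *)
Definition composable (T : finType) (Gam : rel T) (w : seq T) : Prop :=
  apply_ok Gam (rev w).

Inductive rel_step (T : finType) (e : rel T) (Gam : rel T) : seq T -> seq T -> Prop :=
  | step_R1 (w1 w2 : seq T) (i : T) :
      composable Gam (w1 ++ [:: i; i] ++ w2) -> composable Gam (w1 ++ w2) ->
      rel_step e Gam (w1 ++ [:: i; i] ++ w2) (w1 ++ w2)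
  | step_R2 (w1 w2 : seq T) (i j : T) :
      ~~ e i j ->
      composable Gam (w1 ++ [:: i; j] ++ w2) -> composable Gam (w1 ++ [:: j; i] ++ w2) ->
      rel_step e Gam (w1 ++ [:: i; j] ++ w2) (w1 ++ [:: j; i] ++ w2).

Definition same_morphism (T : finType) (e : rel T) (Gam : rel T) : relation (seq T) :=
  clos_refl_sym_trans (seq T) (rel_step e Gam).

Definition reduced (T : finType) (e : rel T) (Gam : rel T) (w : seq T) : Prop :=
  forall w', composable Gam w' -> same_morphism e Gam w w' -> size w <= size w'.

From mathcomp Require Import all_boot zify.
From Stdlib Require Import Relation_Operators FunctionalExtensionality.
Set Implicit Arguments. Unset Strict Implicit. Unset Printing Implicit Defensive.

(* Say that a flip of i is "up" if i is a source at that moment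
   and "down" otherwise. Relation (R1) removes one up and one down flip of
   the same vertex (the vertex has a neighbour, so it is never both a source
   and a sink) and (R2) does not change the type of any flip, so for every
   vertex i the difference (#up flips of i) - (#down flips of i) depends only
   on the morphism; hence every expression has at least that many letters i.
   If consecutive occurrences of i are separated by a neighbour, then all
   flips of i have the same type, so the word has exactly that many letters i
   and is reduced. The key point is that a neighbour m of i then occurs
   exactly once between two consecutive occurrences of i: two occurrences of
   m with no i in between would, by induction, be flips of the same type,
   which is impossible since flipping m reverses the edge between i and m.
   Conversely, two occurrences of i with no neighbour in between can be
   brought together by (R2) and cancelled by (R1). *)

Section Flips.

Variable T : finType.
Implicit Types (G : rel T) (s : seq T) (i k : T).

Lemma flipK G i : flip (flip G i) i = G.
Proof.
apply: functional_extensionality => x; apply: functional_extensionality => y.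
by rewrite /flip; case: (x == i); case: (y == i).
Qed.

Lemma flipC G i k : flip (flip G i) k = flip (flip G k) i.
Proof.
apply: functional_extensionality => x; apply: functional_extensionality => y.
by rewrite /flip; case: (x == i); case: (y == i); case: (x == k); case: (y == k).
Qed.

Definition flips G s : rel T := foldl (@flip T) G s.

Lemma apply_ok_cat G s1 s2 :
  apply_ok G (s1 ++ s2) <-> apply_ok G s1 /\ apply_ok (flips G s1) s2.
Proof. by elim: s1 G => [|k s1 IH] G /=; rewrite ?IH; tauto. Qed.

Lemma is_source_flip G i : is_source (flip G i) i = is_sink G i.
Proof. by apply: eq_forallb => j; rewrite /flip eqxx orbT. Qed.

(* [k] does not occur in [s], so only the flips of [m] act on the edge [km]. *)
Lemma flips_edge G s k m : k \notin s -> m != k ->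
  flips G s k m = (if odd (count_mem m s) then G m k else G k m).
Proof.
elim: s G => [|x s IH] G //=; rewrite in_cons negb_or => /andP[kNx kNs] mNk.
rewrite IH // /flip [_ == x]eq_sym (negbTE kNx) /=.
by case: (eqVneq x m) => //= _; case: odd.
Qed.

Fixpoint source_flips G s i : nat :=
  if s is k :: s' then ((k == i) && is_source G k) + source_flips (flip G k) s' i
  else 0.

Fixpoint nonsource_flips G s i : nat :=
  if s is k :: s' then ((k == i) && ~~ is_source G k) + nonsource_flips (flip G k) s' i
  else 0.

Lemma source_flips_cat G s1 s2 i :
  source_flips G (s1 ++ s2) i = source_flips G s1 i + source_flips (flips G s1) s2 i.
Proof. by elim: s1 G => [|k s1 IH] G //=; rewrite IH addnA. Qed.

Lemma nonsource_flips_cat G s1 s2 i :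
  nonsource_flips G (s1 ++ s2) i =
  nonsource_flips G s1 i + nonsource_flips (flips G s1) s2 i.
Proof. by elim: s1 G => [|k s1 IH] G //=; rewrite IH addnA. Qed.

Lemma source_nonsource_flips G s i :
  source_flips G s i + nonsource_flips G s i = count_mem i s.
Proof.
elim: s G => [|k s IH] G //=; rewrite -(IH (flip G k)).
by case: (k == i); case: (is_source G k) => /=; lia.
Qed.

Lemma source_flips_notin G s i : i \notin s -> source_flips G s i = 0.
Proof. by move/count_memPn => s0; have := source_nonsource_flips G s i; lia. Qed.

Lemma nonsource_flips_notin G s i : i \notin s -> nonsource_flips G s i = 0.
Proof. by move/count_memPn => s0; have := source_nonsource_flips G s i; lia. Qed.

Definition flip_balanced G s s' := forall i,
  source_flips G s i + nonsource_flips G s' i = source_flips G s' i + nonsource_flips G s i.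

Lemma flip_balanced_catl G p s s' :
  flip_balanced (flips G p) s s' -> flip_balanced G (p ++ s) (p ++ s').
Proof.
by move=> bal i; rewrite !source_flips_cat !nonsource_flips_cat; have := bal i; lia.
Qed.

End Flips.

Lemma size_sum_count_mem (T : finType) (s : seq T) :
  size s = \sum_(i : T) count_mem i s.
Proof.
elim: s => [|k s IH] /=; first by rewrite big1.
rewrite big_split /= -IH (bigD1 k) //= eqxx big1 ?addn0 //.
by move=> i /negbTE; rewrite eq_sym => ->.
Qed.

Lemma split_first_occurrence (T : eqType) (m : T) (s : seq T) :
  m \in s -> exists p r, s = p ++ m :: r /\ m \notin p.
Proof.
elim: s => [|x s IH] //; rewrite in_cons; case: (eqVneq m x) => [->|mNx] /= ms.
  by exists [::], s.
have [p [r [-> mNp]]] := IH ms; exists (x :: p), r.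
by rewrite in_cons negb_or mNx.
Qed.

Lemma split_two_first_occurrences (T : eqType) (m : T) (s : seq T) :
  m \in s -> ~~ odd (count_mem m s) ->
  exists p q r, s = p ++ m :: q ++ m :: r /\ m \notin q.
Proof.
move=> ms; have [p [t [-> mNp]]] := split_first_occurrence ms => even_m.
have mt : m \in t.
  apply: contraT => /count_memPn t0; move: even_m.
  by rewrite count_cat (count_memPn mNp) /= eqxx t0.
have [q [r [-> mNq]]] := split_first_occurrence mt.
by exists p, q, r.
Qed.

Definition separated (T : eqType) (e : rel T) (s : seq T) : Prop :=
  forall (s1 s2 s3 : seq T) (i : T), s = s1 ++ i :: s2 ++ i :: s3 ->
    exists2 j, j \in s2 & e i j.

Lemma separated_infix (T : eqType) (e : rel T) (p s r : seq T) :
  separated e (p ++ s ++ r) -> separated e s.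
Proof.
move=> sep s1 s2 s3 i Es; apply: (sep (p ++ s1) s2 (s3 ++ r)).
by rewrite Es -!catA /= -!catA.
Qed.

Lemma separated_rev (T : eqType) (e : rel T) (s : seq T) :
  separated e s -> separated e (rev s).
Proof.
move=> sep s1 s2 s3 i Es.
have /sep[j j_s2 eij] : s = rev s3 ++ i :: rev s2 ++ i :: rev s1.
  by rewrite -(revK s) Es !(rev_cat, rev_cons) -!cats1 -!catA.
by exists j; rewrite // -mem_rev.
Qed.

Section Orientations.

Variables (T : finType) (e : rel T).
Hypothesis e_sym : symmetric e.
Implicit Types (G : rel T) (s : seq T) (i j k m : T).

Lemma orientation_flip G k : is_orientation e G -> is_orientation e (flip G k).
Proof.
move=> oG x y; rewrite /flip [(y == k) || _]orbC.
by case: ((x == k) || (y == k)); [rewrite oG e_sym | exact: oG].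
Qed.

Lemma orientation_flips G s : is_orientation e G -> is_orientation e (flips G s).
Proof. by elim: s G => [|k s IH] G oG //=; apply/IH/orientation_flip. Qed.

Lemma orientation_nonedge G x y : is_orientation e G -> ~~ e x y -> G x y = false.
Proof. by move=> oG nxy; rewrite oG (negbTE nxy). Qed.

Lemma orientation_edge G x y : is_orientation e G -> e x y -> G y x = ~~ G x y.
Proof. by move=> oG exy; have := oG x y; rewrite exy; case: (G x y); case: (G y x). Qed.

Lemma is_source_flip_nonadj G i k : is_orientation e G -> i != k -> ~~ e i k ->
  is_source (flip G k) i = is_source G i.
Proof.
move=> oG iNk nik; apply: eq_forallb => j; rewrite /flip (negbTE iNk) orbF.
case: eqP => // ->.
by rewrite !(orientation_nonedge oG) // e_sym.
Qed.

Lemma is_sink_flip_nonadj G i k : is_orientation e G -> i != k -> ~~ e i k ->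
  is_sink (flip G k) i = is_sink G i.
Proof.
move=> oG iNk nik; apply: eq_forallb => j; rewrite /flip (negbTE iNk) /=.
case: eqP => // ->.
by rewrite !(orientation_nonedge oG) // e_sym.
Qed.

Lemma not_source_and_sink G i j : is_orientation e G -> e i j ->
  ~~ (is_source G i && is_sink G i).
Proof.
move=> oG eij; apply/negP => /andP[/forallP/(_ j) nji /forallP/(_ j) nij].
by move: nji; rewrite (orientation_edge oG eij) nij.
Qed.

Lemma is_source_edge G m k : is_orientation e G -> e m k ->
  is_source G m || is_sink G m -> is_source G m = G m k.
Proof.
move=> oG emk ok_m; case Gmk: (G m k).
- by case/orP: ok_m => // /forallP/(_ k); rewrite Gmk.
- apply/negbTE/negP => /forallP/(_ k).
  by rewrite (orientation_edge oG emk) Gmk.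
Qed.

Lemma flip_balanced_cancel G i j r : is_orientation e G -> e i j ->
  is_source G i || is_sink G i -> flip_balanced G (i :: i :: r) r.
Proof.
move=> oG eij ok_i k /=; rewrite flipK is_source_flip.
have := not_source_and_sink oG eij.
by case: (i == k); case: (is_source G i) ok_i; case: (is_sink G i) => //= _ _; lia.
Qed.

Lemma flip_balanced_swap G i j r : is_orientation e G -> ~~ e i j ->
  flip_balanced G (j :: i :: r) (i :: j :: r).
Proof.
move=> oG nij k; case: (eqVneq i j) => [<-|iNj]; first lia.
rewrite /= (flipC G i j) (is_source_flip_nonadj oG iNj nij).
have jNi : j != i by rewrite eq_sym.
have nji : ~~ e j i by rewrite e_sym.
by rewrite (is_source_flip_nonadj oG jNi nji); lia.
Qed.

Lemma apply_ok_swap G p x y r : is_orientation e G -> ~~ e x y ->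
  apply_ok G (p ++ x :: y :: r) -> apply_ok G (p ++ y :: x :: r).
Proof.
move=> oG nxy /apply_ok_cat[ok_p ok_r]; apply/apply_ok_cat; split => //.
case: (eqVneq x y) ok_r => [<- //|xNy ok_r].
have oGp := orientation_flips p oG.
have yNx : y != x by rewrite eq_sym.
have nyx : ~~ e y x by rewrite e_sym.
move: ok_r => /= [ok_x [ok_y ok_r]]; rewrite flipC in ok_r.
rewrite (is_source_flip_nonadj oGp yNx nyx) (is_sink_flip_nonadj oGp yNx nyx) in ok_y.
by rewrite (is_source_flip_nonadj oGp xNy nxy) (is_sink_flip_nonadj oGp xNy nxy).
Qed.

Lemma composable_swap G w1 w2 x y : is_orientation e G -> ~~ e x y ->
  composable G (w1 ++ [:: x; y] ++ w2) -> composable G (w1 ++ [:: y; x] ++ w2).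
Proof.
move=> oG nxy; rewrite /composable !rev_cat /= -!catA /=.
by apply: apply_ok_swap; rewrite // e_sym.
Qed.

Lemma composable_cancel G w1 w2 i :
  composable G (w1 ++ [:: i; i] ++ w2) -> composable G (w1 ++ w2).
Proof.
rewrite /composable !rev_cat /= -!catA /= => /apply_ok_cat[ok1 /= [_ [_ ok2]]].
by apply/apply_ok_cat; rewrite flipK in ok2.
Qed.

Hypothesis has_neighbour : forall x, exists y, e x y.

Lemma rel_step_balanced G w w' : is_orientation e G ->
  rel_step e G w w' -> flip_balanced G (rev w) (rev w').
Proof.
move=> oG [w1 w2 i ok_w _ | w1 w2 i j nij _ _];
  rewrite !rev_cat /= -!catA /=; apply: flip_balanced_catl.
- have [j eij] := has_neighbour i.
  apply: (flip_balanced_cancel _ (orientation_flips _ oG) eij).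
  by move: ok_w; rewrite /composable !rev_cat /= -catA /= => /apply_ok_cat[_ []].
- exact: (flip_balanced_swap _ (orientation_flips _ oG)).
Qed.

Lemma same_morphism_balanced G w w' : is_orientation e G ->
  same_morphism e G w w' -> flip_balanced G (rev w) (rev w').
Proof.
move=> oG; elim => [x y /(rel_step_balanced oG) // | x | x y _ IH | x y z _ IH1 _ IH2] i.
- lia.
- by have := IH i; lia.
- by have := IH1 i; have := IH2 i; lia.
Qed.

End Orientations.

Lemma same_morphism_odd_size (T : finType) (e G : rel T) w w' :
  same_morphism e G w w' -> odd (size w) = odd (size w').
Proof.
elim => [x y [w1 w2 i _ _ | w1 w2 i j _ _ _] | x | x y _ -> | x y z _ -> _ ->] //.
- by rewrite !size_cat /= !addnS /= negbK.
- by rewrite !size_cat.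
Qed.

Section SeparatedWords.

Variables (T : finType) (e : rel T).
Hypotheses (e_sym : symmetric e) (e_irrefl : irreflexive e).
Implicit Types (G : rel T) (s : seq T) (k m : T).

Lemma flip_type_parity G k m s : is_orientation e G -> e k m -> k \notin s ->
  apply_ok G (k :: s ++ [:: k]) ->
  (is_source G k == is_source (flips (flip G k) s) k) = odd (count_mem m s).
Proof.
move=> oG ekm kNs [ok_k /apply_ok_cat[_ /= [ok_k' _]]].
have mNk : m != k by apply: contraTneq ekm => ->; rewrite e_irrefl.
have oG' := orientation_flips e_sym s (orientation_flip e_sym k oG).
rewrite (is_source_edge oG ekm ok_k) (is_source_edge oG' ekm ok_k').
rewrite flips_edge // /flip !eqxx orbT /= (orientation_edge oG ekm).
by case: odd; case: (G k m).
Qed.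

Lemma separated_flip_same_type n G k s : size s < n -> is_orientation e G ->
  apply_ok G (k :: s ++ [:: k]) -> k \notin s -> separated e (k :: s ++ [:: k]) ->
  is_source G k = is_source (flips (flip G k) s) k.
Proof.
elim: n G k s => [//|n IHn] G k s s_lt oG ok_w kNs sep.
have [m ms ekm] := sep [::] s [::] k erefl.
have := flip_type_parity oG ekm kNs ok_w.
case: eqP => [// | _ /esym/negbT even_m]; exfalso.
have [p [q [r [Es mNq]]]] := split_two_first_occurrences ms even_m; subst s.
set H := flips (flip G k) p.
have oH : is_orientation e H by exact/(orientation_flips e_sym)/(orientation_flip e_sym).
have ok_mqm : apply_ok H (m :: q ++ [:: m]).
  move: ok_w => /= [_ /apply_ok_cat[/apply_ok_cat[_ ok_mqmr] _]].
  move: ok_mqmr => /= [ok_m /apply_ok_cat[ok_q /= [ok_m' _]]].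
  by split => //; apply/apply_ok_cat.
have kNq : k \notin q.
  by apply: contra kNs => kq; rewrite !(mem_cat, in_cons) kq !orbT.
have sep_mqm : separated e (m :: q ++ [:: m]).
  apply: (@separated_infix _ _ (k :: p) _ (r ++ [:: k])).
  by move: sep; rewrite -!catA /= -!catA.
have emk : e m k by rewrite e_sym.
have := flip_type_parity oH emk mNq ok_mqm.
rewrite (IHn H m q) ?eqxx ?(count_memPn kNq) //.
by move: s_lt; rewrite !size_cat /= size_cat /=; lia.
Qed.

Lemma separated_flips_one_type G s i : is_orientation e G -> apply_ok G s ->
  separated e s -> source_flips G s i = 0 \/ nonsource_flips G s i = 0.
Proof.
elim: s G => [|k s IH] G oG ok_s sep; first by left.
move: (ok_s) => /= [_ ok_s'].
have sep_s : separated e s by apply: (@separated_infix _ _ [:: k] _ [::]); rewrite cats0.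
have IHs := IH _ (orientation_flip e_sym k oG) ok_s' sep_s.
rewrite /=; case: (eqVneq k i) IHs => [<-|_] IHs //.
case: (boolP (k \in s)) => ks; last first.
  rewrite source_flips_notin // nonsource_flips_notin //.
  by case: (is_source G k); [right|left].
have [q [r [Es kNq]]] := split_first_occurrence ks.
have ok_kqk : apply_ok G (k :: q ++ [:: k]).
  move: ok_s; rewrite /= Es => -[ok_k /apply_ok_cat[ok_q /= [ok_k' _]]].
  by split; last by apply/apply_ok_cat.
have sep_kqk : separated e (k :: q ++ [:: k]).
  by apply: (@separated_infix _ _ [::] _ r); move: sep; rewrite Es /= -catA.
have same := separated_flip_same_type (ltnSn (size q)) oG ok_kqk kNq sep_kqk.
move: IHs; rewrite Es source_flips_cat nonsource_flips_cat.
rewrite source_flips_notin // nonsource_flips_notin //= eqxx -same.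
by case: (is_source G k) => /=; lia.
Qed.

End SeparatedWords.

Section Reduction.

Variables (T : finType) (e G : rel T).
Hypotheses (e_sym : symmetric e) (oG : is_orientation e G).
Implicit Types (w a : seq T) (i : T).

Lemma same_morphism_move_right w1 a w3 i : (forall x, x \in a -> ~~ e i x) ->
  composable G (w1 ++ i :: a ++ w3) ->
  same_morphism e G (w1 ++ i :: a ++ w3) (w1 ++ a ++ i :: w3) /\
  composable G (w1 ++ a ++ i :: w3).
Proof.
elim: a w1 => [|x a IH] w1 a_nb ok_w /=; first by split => //; apply: rst_refl.
have nix : ~~ e i x by apply: a_nb; rewrite in_cons eqxx.
have ok_swap := composable_swap e_sym oG nix ok_w.
have [same ok'] : same_morphism e G ((w1 ++ [:: x]) ++ i :: a ++ w3)
                                   ((w1 ++ [:: x]) ++ a ++ i :: w3) /\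
                  composable G ((w1 ++ [:: x]) ++ a ++ i :: w3).
  by apply: IH => [z za | ]; [apply: a_nb; rewrite in_cons za orbT | rewrite -catA].
move: same ok'; rewrite -!catA /= => same ok'; split => //.
by apply: rst_trans same; apply/rst_step/step_R2.
Qed.

Lemma not_reduced_cancel w1 a w3 i : (forall x, x \in a -> ~~ e i x) ->
  composable G (w1 ++ i :: a ++ i :: w3) -> ~ reduced e G (w1 ++ i :: a ++ i :: w3).
Proof.
move=> a_nb ok_w red.
have [same ok_ii] := same_morphism_move_right a_nb ok_w.
have ok_ii' : composable G ((w1 ++ a) ++ [:: i; i] ++ w3) by rewrite -catA.
have ok_short := composable_cancel ok_ii'.
have : same_morphism e G (w1 ++ i :: a ++ i :: w3) ((w1 ++ a) ++ w3).
  apply: rst_trans same _; apply: rst_step.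
  by move: (step_R1 e ok_ii' ok_short); rewrite -!catA.
move=> /(red _ ok_short); rewrite !size_cat /= !size_cat /=; lia.
Qed.

Lemma separated_of_reduced w : composable G w -> reduced e G w -> separated e w.
Proof.
move=> ok_w red w1 w2 w3 i Ew.
case: (boolP (has (e i) w2)) => [/hasP[j j_w2 eij] | no_nb]; first by exists j.
have nb_w2 x : x \in w2 -> ~~ e i x by move=> x_w2; apply: (hasPn no_nb).
exfalso; case: (boolP (i \in w2)) => [i_w2 | iNw2]; last first.
  by apply: (@not_reduced_cancel w1 w2 w3 i nb_w2); rewrite -Ew.
have [a [b [Ew2 _]]] := split_first_occurrence i_w2.
have Ew' : w = w1 ++ i :: a ++ i :: (b ++ i :: w3) by rewrite Ew Ew2 -catA.
rewrite Ew' in ok_w red; apply: (not_reduced_cancel _ ok_w red).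
by move=> x x_a; apply: nb_w2; rewrite Ew2 mem_cat x_a.
Qed.

Lemma reduced_of_size_le1 w : size w <= 1 -> reduced e G w.
Proof.
case: w => [|i [|//]] _ w' _ same //=.
by move: (same_morphism_odd_size same); case: (w') => /=.
Qed.

Hypotheses (e_irrefl : irreflexive e) (has_neighbour : forall x, exists y, e x y).

Lemma reduced_of_separated w : composable G w -> separated e w -> reduced e G w.
Proof.
move=> ok_w sep w' _ same.
have bal := same_morphism_balanced e_sym has_neighbour oG same.
have one_type i := separated_flips_one_type e_sym e_irrefl i oG ok_w (separated_rev sep).
rewrite -(size_rev w) -(size_rev w') !size_sum_count_mem; apply: leq_sum => i _.
by rewrite -!(source_nonsource_flips G); have := bal i; have := one_type i; lia.
Qed.

End Reduction.

Lemma connect_isolated (T : finType) (e : rel T) x y :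
  (forall z, ~~ e x z) -> connect e x y -> y = x.
Proof.
move=> x_iso /connectP[[|z p] //= /andP[exz _]].
by rewrite (negbTE (x_iso z)) in exz.
Qed.

Theorem mainTheorem15 (T : finType) (e : rel T) (Gam : rel T) (w : seq T) :
  is_tree e -> is_orientation e Gam -> composable Gam w ->
  (reduced e Gam w <->
   (forall (w1 w2 w3 : seq T) (i : T), w = w1 ++ i :: w2 ++ i :: w3 ->
      exists2 j, j \in w2 & e i j)).
Proof.
move=> [_ e_sym e_nloop e_conn _] oG ok_w.
have e_irrefl : irreflexive e by move=> x; apply/negbTE.
split; first exact: separated_of_reduced.
move=> sep; case: (boolP [forall x, [exists y, e x y]]) => [/forallP nb | ].
  by apply: reduced_of_separated => // x; apply/existsP.
(* An isolated vertex is both a source and a sink, so the flip count says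
   nothing; but then the tree is a single vertex and separated words are short. *)
move=> /forallPn[x /existsPn x_iso].
have single y : y = x by apply: connect_isolated.
apply: reduced_of_size_le1; case: w {ok_w} sep => [|a [|b r]] // sep.
suff [j] : exists2 j, j \in [::] & e a j by [].
by apply: (sep [::] [::] r a); rewrite (single b) (single a).
Qed.
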